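(* Let $V$ be a toroidal vertex algebra and let $I$ be an ideal of $V$. Define $$K(I)=\{v\in V\mid v_{m_0,\mathbf{m}}V\subset I\ \text{for all }(m_0,\mathbf{m})\in\mathbb{Z}\times\mathbb{Z}^r\},\qquad \mathcal{R}(I)=I\cap V^0,$$ and for an ideal $I^0$ of $V^0$ define $\mathcal{G}(I^0)=\mathrm{span}\{a_{m_0,\mathbf{m}}v\mid a\in I^0, v\in V,(m_0,\mathbf{m})\in\mathbb{Z}\times\mathbb{Z}^r\}$ (an ideal of $V$). Then $$K(\mathcal{G}(\mathcal{R}(I)))=K(I)\quad\text{and}\quad \mathcal{R}(I)=\mathcal{R}(K(I)).$$
   Context: Fix a positive integer $r$. Write $\mathbf{x}=(x_1,\dots,x_r)$, $\mathbf{x}^{\mathbf{m}}=x_1^{m_1}\cdots x_r^{m_r}$ (similarly for other variables), $\mathbf{z}\mathbf{y}=(z_1y_1,\dots,z_ry_r)$. For a vector space $W$ put $\mathcal{E}(W,r)=\mathrm{Hom}(W,W[[x_1^{\pm1},\dots,x_r^{\pm1}]]((x_0)))$. A toroidal vertex algebra is a vector space $V$ with a linear map $Y(\cdot;x_0,\mathbf{x}):V\to\mathcal{E}(V,r)$, $v\mapsto\sum_{(m_0,\mathbf{m})\in\mathbb{Z}\times\mathbb{Z}^r}v_{m_0,\mathbf{m}}x_0^{-m_0-1}\mathbf{x}^{-\mathbf{m}}$, and a vector $\mathbf{1}$ with $Y(\mathbf{1};x_0,\mathbf{x})v=v$, $Y(v;x_0,\mathbf{x})\mathbf{1}\in V[[x_0,x_1^{\pm1},\dots,x_r^{\pm1}]]$,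 and the Jacobi identity $$z_0^{-1}\delta\!\left(\tfrac{x_0-y_0}{z_0}\right)Y(u;x_0,\mathbf{z}\mathbf{y})Y(v;y_0,\mathbf{y})-z_0^{-1}\delta\!\left(\tfrac{y_0-x_0}{-z_0}\right)Y(v;y_0,\mathbf{y})Y(u;x_0,\mathbf{z}\mathbf{y})=y_0^{-1}\delta\!\left(\tfrac{x_0-z_0}{y_0}\right)Y(Y(u;z_0,\mathbf{z})v;y_0,\mathbf{y})$$ for all $u,v$, where $Y(u;x_0,\mathbf{z}\mathbf{y})=\sum u_{m_0,\mathbf{m}}x_0^{-m_0-1}\mathbf{z}^{-\mathbf{m}}\mathbf{y}^{-\mathbf{m}}$. An ideal of $V$ is a subspace $I$ with $u_{m_0,\mathbf{m}}v\in I$ whenever $u\in I$ or $v\in I$. $V^0=\mathrm{span}\{v_{m_0,\mathbf{m}}\mathbf{1}\}$ is a toroidal vertex subalgebra; $\mathcal{R}(I)$ is an ideal of $V^0$. *)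

From HB Require Import structures.
From mathcomp Require Import all_boot all_order all_algebra.
Set Implicit Arguments.
Unset Strict Implicit.
Unset Printing Implicit Defensive.
Import Order.TTheory GRing.Theory Num.Theory.
Local Open Scope ring_scope.

(* Generalized binomial coefficient binom(p, i) for p : int, i : nat:
   p (p-1) ... (p-i+1) / i!.  For p = -(n+1) < 0 this is (-1)^i C(i+n, i). *)
Definition binz (p : int) (i : nat) : int :=
  match p with
  | Posz n => ('C(n, i))%:Z
  | Negz n => (-1) ^+ i * ('C(i + n, i))%:Z
  end.

(* A toroidal vertex algebra over the field K with underlying vector space V.
   tva_mode v m0 m w  is  v_{m0,m} w, the coefficient of x0^{-m0-1} x^{-m}
   in Y(v; x0, x) w.  The Jacobi identity is stated through its coefficients
   (Borcherds identity form). *)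
Record toroidal_va (K : fieldType) (V : lmodType K) (r : nat) := ToroidalVA {
  tva_mode : V -> int -> 'rV[int]_r -> V -> V;
  tva_vac : V;
  tva_linl : forall (a : K) u v m0 m w,
      tva_mode (a *: u + v) m0 m w = a *: tva_mode u m0 m w + tva_mode v m0 m w;
  tva_linr : forall u m0 m (a : K) v w,
      tva_mode u m0 m (a *: v + w) = a *: tva_mode u m0 m v + tva_mode u m0 m w;
  (* Y(u; x0, x) w lies in V[[x^{+-1}]]((x0)) *)
  tva_trunc : forall v w, exists N : int,
      forall (m0 : int) m, N <= m0 -> tva_mode v m0 m w = 0;
  tva_vacuum : forall m0 m v,
      tva_mode tva_vac m0 m v = if (m0 == -1) && (m == 0) then v else 0;
  (* Y(v; x0, x) 1 lies in V[[x0, x^{+-1}]] *)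
  tva_creation : forall v (m0 : int) m, 0 <= m0 -> tva_mode v m0 m tva_vac = 0;
  (* Jacobi identity, coefficient of z0^{-s-1} x0^{-p-1} y0^{-q-1} z^{-m} y^{-k};
     all sums over i >= 0 are finite, cut at any N beyond which all terms vanish *)
  tva_jacobi : forall u v w (p q s : int) (m k : 'rV[int]_r) (N : nat),
      (forall i : nat, (N <= i)%N ->
         [/\ tva_mode u (s + i%:Z) m v = 0,
             tva_mode v (q + i%:Z) (k - m) w = 0
           & tva_mode u (p + i%:Z) m w = 0]) ->
      \sum_(0 <= i < N)
          tva_mode (tva_mode u (s + i%:Z) m v) (p + q - i%:Z) k w *~ binz p i
      = \sum_(0 <= i < N)
          (tva_mode u (p + s - i%:Z) m (tva_mode v (q + i%:Z) (k - m) w)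
           - tva_mode v (q + s - i%:Z) (k - m) (tva_mode u (p + i%:Z) m w)
               *~ ((-1) ^+ `|s|%N))
          *~ ((-1) ^+ i * binz s i)
}.

Section Defs.
Variables (K : fieldType) (V : lmodType K) (r : nat) (A : toroidal_va V r).

Local Notation md := (tva_mode A).

Inductive in_span (S : V -> Prop) : V -> Prop :=
  | span_base x : S x -> in_span S x
  | span_zero : in_span S 0
  | span_comb (a : K) x y : in_span S x -> in_span S y -> in_span S (a *: x + y).

Definition subspace (S : V -> Prop) : Prop :=
  S 0 /\ forall (a : K) x y, S x -> S y -> S (a *: x + y).

Definition tva_ideal (I : V -> Prop) : Prop :=
  subspace I /\ forall u v m0 m, (I u \/ I v) -> I (md u m0 m v).

Definition V0 : V -> Prop :=
  in_span (fun x => exists v m0 m, x = md v m0 m (tva_vac A)).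

Definition Kid (I : V -> Prop) : V -> Prop :=
  fun v => forall m0 m w, I (md v m0 m w).

Definition Rid (I : V -> Prop) : V -> Prop := fun v => I v /\ V0 v.

Definition Gid (I0 : V -> Prop) : V -> Prop :=
  in_span (fun x => exists a v m0 m, I0 a /\ x = md a m0 m v).

End Defs.

From mathcomp Require Import all_boot all_order all_algebra.
From mathcomp Require Import zify.
Set Implicit Arguments.
Unset Strict Implicit.
Unset Printing Implicit Defensive.
Import Order.TTheory GRing.Theory Num.Theory.
Local Open Scope ring_scope.

(* Two instances of the Jacobi identity, each with a single surviving term,
   drive the proof: taking [v = 1] gives the creation formula
   [u_{p,m} w = (u_{-1,m} 1)_{p,m} w], and taking [v = w = 1] shows that
   [(u_{n,l} 1)_{-1,k} 1] is [u_{n,l} 1] when [k = l] and [0] otherwise.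
   The first formula puts every [v_{p,m} w] with [v] in [K(I)] into
   [G(R(I))]; the second writes every element [v] of [V^0] as the finite sum
   of its components [v_{-1,k} 1], which all lie in [I] when [v] is in
   [K(I)]. *)

Lemma big_seq_support (I : eqType) (T : nmodType) (f : I -> T) (s t : seq I) :
    uniq s -> uniq t -> {subset s <= t} ->
  (forall i, i \notin s -> f i = 0) -> \sum_(i <- t) f i = \sum_(i <- s) f i.
Proof.
move=> us ut sst f0; rewrite (bigID (mem s)) /= [X in _ + X]big1 ?addr0.
  rewrite -big_filter; apply/perm_big/uniq_perm; rewrite ?filter_uniq //.
  by move=> i; rewrite mem_filter; case: (boolP (i \in s)) => // /sst ->.
by move=> i /f0.
Qed.

Lemma big_nat_head (T : nmodType) (n : nat) (F : nat -> T) : (0 < n)%N ->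
  (forall i, (0 < i)%N -> F i = 0) -> \sum_(0 <= i < n) F i = F 0%N.
Proof.
move=> n_gt0 F0; rewrite big_ltn // big_nat_cond big1 ?addr0 //.
by move=> i /andP[/andP[i_gt0 _] _]; apply: F0.
Qed.

Lemma binz0 (p : int) : binz p 0 = 1.
Proof. by case: p => n /=; rewrite ?bin0 ?expr0 ?mul1r. Qed.

Section ToroidalVertexAlgebra.
Variables (K : fieldType) (V : lmodType K) (r : nat) (A : toroidal_va V r).
Local Notation md := (tva_mode A).
Local Notation vac := (tva_vac A).

Lemma tva_mode0r u (m0 : int) (m : 'rV[int]_r) : md u m0 m 0 = 0.
Proof.
have := tva_linr A u m0 m (-1) 0 0.
by rewrite scaler0 add0r scaleN1r addNr.
Qed.

Lemma tva_mode0l (m0 : int) (m : 'rV[int]_r) w : md 0 m0 m w = 0.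
Proof.
have := tva_linl A (-1) 0 0 m0 m w.
by rewrite scaler0 add0r scaleN1r addNr.
Qed.

Lemma tva_vacuum_neq (m0 : int) (m : 'rV[int]_r) v :
  m0 != -1 -> md vac m0 m v = 0.
Proof. by rewrite tva_vacuum => /negbTE ->. Qed.

Lemma tva_vacuum_id v : md vac (-1) 0 v = v.
Proof. by rewrite tva_vacuum !eqxx. Qed.

Lemma tva_jacobi_head u v w (p q s : int) (m k : 'rV[int]_r) :
    (forall i : nat, (0 < i)%N ->
       md (md u (s + i%:Z) m v) (p + q - i%:Z) k w *~ binz p i = 0) ->
    (forall i : nat, (0 < i)%N ->
       md u (p + s - i%:Z) m (md v (q + i%:Z) (k - m) w) = 0) ->
    (forall i : nat, (0 < i)%N ->
       md v (q + s - i%:Z) (k - m) (md u (p + i%:Z) m w) = 0) ->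
  md (md u s m v) (p + q) k w
  = md u (p + s) m (md v q (k - m) w)
    - md v (q + s) (k - m) (md u p m w) *~ ((-1) ^+ `|s|%N).
Proof.
move=> lhs0 rhs0 rhs0'.
have [Nuv uv0] := tva_trunc A u v; have [Nvw vw0] := tva_trunc A v w.
have [Nuw uw0] := tva_trunc A u w.
pose N := (`|Nuv - s| + `|Nvw - q| + `|Nuw - p|).+1%N.
have trunc i : (N <= i)%N -> [/\ md u (s + i%:Z) m v = 0,
    md v (q + i%:Z) (k - m) w = 0 & md u (p + i%:Z) m w = 0].
  by move=> Ni; split; [apply: uv0 | apply: vw0 | apply: uw0]; lia.
have := tva_jacobi trunc.
rewrite !big_nat_head //; last first.
  by move=> i i_gt0; rewrite (rhs0 i) // (rhs0' i) // sub0r mul0rz oppr0 mul0rz.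
by rewrite !addr0 !binz0 mulr1 !mulr1z.
Qed.

Lemma tva_mode_creation u (p : int) (m : 'rV[int]_r) w :
  md (md u (-1) m vac) p m w = md u p m w.
Proof.
have := @tva_jacobi_head u vac w p 0 (-1) m m.
rewrite addr0 !sub0r subrr tva_vacuum_id [md vac 0 _ _]tva_vacuum_neq //.
rewrite (tva_mode0r u (p - 1) m) sub0r expr1 mulrN1z opprK.
apply.
- by move=> i i_gt0; rewrite tva_creation ?tva_mode0l ?mul0rz //; lia.
- by move=> i i_gt0; rewrite tva_vacuum_neq ?tva_mode0r //; lia.
- by move=> i i_gt0; rewrite tva_vacuum_neq //; lia.
Qed.

Lemma tva_creation_component u (n : int) (l k : 'rV[int]_r) :
  md (md u n l vac) (-1) k vac = if k == l then md u n l vac else 0.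
Proof.
have := @tva_jacobi_head u vac vac 0 (-1) n l k.
rewrite [md u 0 l vac]tva_creation // (tva_mode0r vac) mul0rz subr0.
rewrite sub0r add0r tva_vacuum eqxx subr_eq0 /= => ->.
- by case: eqP => _; rewrite ?tva_mode0r.
- by case=> // i _; rewrite mulr0z.
- by move=> i i_gt0; rewrite tva_vacuum_neq ?tva_mode0r //; lia.
- by move=> i i_gt0; rewrite add0r tva_creation ?tva_mode0r.
Qed.

Lemma V0_component_sum v : V0 A v ->
  exists s : seq 'rV[int]_r, [/\ uniq s,
    forall k, k \notin s -> md v (-1) k vac = 0
  & v = \sum_(k <- s) md v (-1) k vac].
Proof.
elim=> [x [u [n [l ->]]] | | a x y _ [sx [ux x0 ex]] _ [sy [uy y0 ey]]].
- exists [:: l]; split => //; last by rewrite big_seq1 tva_creation_component eqxx.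
  by move=> k; rewrite inE tva_creation_component => /negbTE ->.
- by exists [::]; split => //; [move=> k _; apply: tva_mode0l | rewrite big_nil].
- have sub_x : {subset sx <= undup (sx ++ sy)}.
    by move=> k; rewrite mem_undup mem_cat => ->.
  have sub_y : {subset sy <= undup (sx ++ sy)}.
    by move=> k; rewrite mem_undup mem_cat orbC => ->.
  exists (undup (sx ++ sy)); split; first exact: undup_uniq.
    move=> k; rewrite mem_undup mem_cat negb_or => /andP[/x0 xk /y0 yk].
    by rewrite tva_linl xk yk scaler0 addr0.
  under eq_bigr do rewrite tva_linl.
  rewrite big_split /= -scaler_sumr.
  rewrite (big_seq_support ux (undup_uniq _) sub_x x0).
  by rewrite (big_seq_support uy (undup_uniq _) sub_y y0) -ex -ey.
Qed.

Variable I : V -> Prop.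
Hypothesis idealI : tva_ideal A I.

Lemma ideal_span (S : V -> Prop) v :
  (forall x, S x -> I x) -> in_span S v -> I v.
Proof.
have [[I0 Icomb] _] := idealI.
by move=> SI; elim=> [x /SI | | a x y _ Ix _ Iy] //; apply: Icomb.
Qed.

Lemma Gid_Rid_sub v : Gid A (Rid A I) v -> I v.
Proof.
apply: ideal_span => _ [a [w [m0 [m [[Ia _] ->]]]]].
by apply: idealI.2; left.
Qed.

Lemma Kid_sub_Gid_Rid v : Kid A I v -> Kid A (Gid A (Rid A I)) v.
Proof.
move=> Kv m0 m w; rewrite -tva_mode_creation; apply: span_base.
exists (md v (-1) m vac), w, m0, m; split => //; split; first exact: Kv.
by apply: span_base; exists v, (-1), m.
Qed.

Lemma ideal_sub_Kid v : I v -> Kid A I v.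
Proof. by move=> Iv m0 m w; apply: idealI.2; left. Qed.

Lemma Kid_V0_sub v : Kid A I v -> V0 A v -> I v.
Proof.
move=> Kv /V0_component_sum [s [_ _ ->]].
have [[I0 Icomb] _] := idealI.
elim: s => [|k s IH]; first by rewrite big_nil.
by rewrite big_cons -[X in I (X + _)]scale1r; apply: Icomb.
Qed.

End ToroidalVertexAlgebra.

Theorem proposition2p21 (K : fieldType) (V : lmodType K) (r : nat)
    (A : toroidal_va V r) (I : V -> Prop) :
  tva_ideal A I ->
  (forall v, Kid A (Gid A (Rid A I)) v <-> Kid A I v) /\
  (forall v, Rid A I v <-> Rid A (Kid A I) v).
Proof.
move=> idealI; split=> v; split.
- by move=> KGv m0 m w; apply: Gid_Rid_sub idealI _ (KGv m0 m w).
- exact: Kid_sub_Gid_Rid.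
- by move=> [Iv V0v]; split=> //; apply: ideal_sub_Kid.
- by move=> [Kv V0v]; split=> //; apply: Kid_V0_sub idealI _ Kv V0v.
Qed.
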